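(* Let $\mathcal H$ be a finite-dimensional Hilbert space, let $P$ be an orthogonal projection on $\mathcal H$, and let $\mathcal E$ be a channel on $\mathcal L(\mathcal H)$ with operation elements $\{E_a\}$, i.e. $\mathcal E(\rho)=\sum_a E_a\rho E_a^\dagger$ with $\sum_a E_a^\dagger E_a={\bf 1}$. Let $\mathcal A$ be a subalgebra of $\mathcal L(P\mathcal H)$ closed under Hermitian conjugation, where operators on $P\mathcal H$ are regarded as operators $X$ on $\mathcal H$ with $X=PXP$ ($\mathcal A$ need not contain $P$). Then $\mathcal A$ is correctable for $\mathcal E$ on states in $P\mathcal H$, i.e. there exists a channel $\mathcal R$ on $\mathcal L(\mathcal H)$ such that $$P\,(\mathcal R\circ\mathcal E)^\dagger(X)\,P = PXP\quad\text{for all }X\in\mathcal A,$$ if and only if $$[P E_c^\dagger E_b P,\, X]=0\quad\text{for all } X\in\mathcal A \text{ and all indices } b,c.$$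
   Context: $\mathcal L(\mathcal K)$ denotes the set of all linear operators on a Hilbert space $\mathcal K$. A channel is a completely positive trace-preserving linear map on $\mathcal L(\mathcal H)$; for a channel $\mathcal F(\rho)=\sum_a F_a\rho F_a^\dagger$ its dual (Heisenberg-picture) map is $\mathcal F^\dagger(X)=\sum_a F_a^\dagger X F_a$, characterized by $\mathrm{Tr}(\rho\,\mathcal F^\dagger(X))=\mathrm{Tr}(\mathcal F(\rho)X)$; in particular $(\mathcal R\circ\mathcal E)^\dagger=\mathcal E^\dagger\circ\mathcal R^\dagger$. *)

(* Finite-dimensional Hilbert space H = C^n, with
   C an arbitrary numClosedFieldType (e.g. the complex numbers). *)
From HB Require Import structures.
From mathcomp Require Import all_boot all_order all_algebra.
Set Implicit Arguments. Unset Strict Implicit. Unset Printing Implicit Defensive.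
Import Order.TTheory GRing.Theory Num.Theory.
Local Open Scope ring_scope.

Section Defs.
Variable C : numClosedFieldType.

Definition hc {m k : nat} (A : 'M[C]_(m, k)) : 'M[C]_(k, m) :=
  (map_mx Num.conj A)^T.

Definition orth_proj {n} (P : 'M[C]_n) : Prop := P *m P = P /\ hc P = P.

(* Positive semidefiniteness of a k x k block matrix with n x n blocks,
   i.e. of an element of M_k(L(H)) = L(C^k (x) H) *)
Definition psd_block {n k : nat} (B : 'I_k -> 'I_k -> 'M[C]_n) : Prop :=
  forall v : 'I_k -> 'cV[C]_n,
    0 <= \sum_(i < k) \sum_(j < k) (hc (v i) *m B i j *m v j) 0 0.

Definition completely_positive {n} (Phi : 'M[C]_n -> 'M[C]_n) : Prop :=
  forall (k : nat) (B : 'I_k -> 'I_k -> 'M[C]_n),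
    psd_block B -> psd_block (fun i j => Phi (B i j)).

Definition trace_preserving {n} (Phi : 'M[C]_n -> 'M[C]_n) : Prop :=
  forall X, \tr (Phi X) = \tr X.

Definition channel {n} (Phi : 'M[C]_n -> 'M[C]_n) : Prop :=
  linear Phi /\ completely_positive Phi /\ trace_preserving Phi.

Definition kraus_map {n m} (E : 'I_m -> 'M[C]_n) (rho : 'M[C]_n) : 'M[C]_n :=
  \sum_(a < m) E a *m rho *m hc (E a).

(* Heisenberg-picture dual: the unique map with
   Tr(rho * dual Phi X) = Tr(Phi rho * X) for all rho, X
   (entry (j,i) equals Tr(Phi(e_ij) X)). *)
Definition dual {n} (Phi : 'M[C]_n -> 'M[C]_n) (X : 'M[C]_n) : 'M[C]_n :=
  \matrix_(j, i) \tr (Phi (delta_mx i j) *m X).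

Definition star_subalgebra_of {n} (P : 'M[C]_n) (A : 'M[C]_n -> Prop) : Prop :=
  [/\ A 0 /\ (forall X Y, A X -> A Y -> A (X + Y)),
      (forall (c : C) X, A X -> A (c *: X)),
      (forall X Y, A X -> A Y -> A (X *m Y)),
      (forall X, A X -> A (hc X)) &
      (forall X, A X -> X = P *m X *m P)].

End Defs.

(* Correctability implies commutation.  Let R correct A, let X be in A and w a
   vector, and put y_a = E_a P w, z_a = E_a P X w.  Positivity of R on 3 x 3
   rank-one block matrices makes the diagonal of each [cp_defect R X y_a z_a]
   nonnegative, while P (R o E)^*(.) P being the identity on A makes the traces
   of these defects sum to zero over a; so every defect vanishes.  An isotropic
   vector of a positive block form lies in its kernel, which turns this into
   the intertwining X R(y_a p^* ) = R(z_a p^* ); taking traces and using trace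
   preservation then shows that P E_c^* E_b P commutes with X.

   Commutation implies correctability.  The operator G = sum_b E_b P E_b^* is
   positive; let Z be its inverse square root on its range and Pi the projection
   onto that range.  Z is a polynomial in G (interpolate t |-> t^(-1/2) on the
   spectrum), so every P E_a^* Z E_c P commutes with A.  The channel with Kraus
   operators P E_c^* Z and 1 - Pi corrects A, because
   sum_c P E_a^* Z E_c P E_c^* Z E_a P = P E_a^* Pi E_a P = P E_a^* E_a P. *)

From HB Require Import structures.
From mathcomp Require Import all_boot all_order all_algebra ring.
Set Implicit Arguments. Unset Strict Implicit. Unset Printing Implicit Defensive.
Import Order.TTheory GRing.Theory Num.Theory.
Local Open Scope ring_scope.

(** * Adjoints, positivity and Kraus maps *)

Section Adjoint.
Variable C : numClosedFieldType.

Lemma hcE k l (M : 'M[C]_(k, l)) i j : hc M i j = (M j i)^*.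
Proof. by rewrite !mxE. Qed.

Lemma hc_trmxC k l (M : 'M[C]_(k, l)) : hc M = (M ^t Num.conj)%sesqui.
Proof. by rewrite /hc map_trmx. Qed.

Lemma hcK k l (M : 'M[C]_(k, l)) : hc (hc M) = M.
Proof. by apply/matrixP => i j; rewrite !hcE conjCK. Qed.

Lemma hcM k l r (M : 'M[C]_(k, l)) (N : 'M[C]_(l, r)) :
  hc (M *m N) = hc N *m hc M.
Proof. by rewrite /hc map_mxM trmx_mul. Qed.

Lemma hcB k l (M N : 'M[C]_(k, l)) : hc (M - N) = hc M - hc N.
Proof. by rewrite /hc map_mxB linearB. Qed.

HB.instance Definition _ k l :=
  GRing.isZmodMorphism.Build _ _ (@hc C k l) (@hcB k l).

Lemma hc0 k l : hc (0 : 'M[C]_(k, l)) = 0. Proof. exact: raddf0. Qed.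

Lemma hcN k l (M : 'M[C]_(k, l)) : hc (- M) = - hc M. Proof. exact: raddfN. Qed.

Lemma hcD k l (M N : 'M[C]_(k, l)) : hc (M + N) = hc M + hc N.
Proof. exact: raddfD. Qed.

Lemma hcZ k l a (M : 'M[C]_(k, l)) : hc (a *: M) = a^* *: hc M.
Proof. by apply/matrixP => i j; rewrite !mxE rmorphM. Qed.

Lemma hc1 k : hc (1%:M : 'M[C]_k) = 1%:M.
Proof. by rewrite /hc map_mx1 trmx1. Qed.

Lemma delta_form n (M : 'M[C]_n) i j :
  (hc (delta_mx i 0 : 'cV_n) *m M *m (delta_mx j 0 : 'cV_n)) 0 0 = M i j.
Proof.
rewrite mxE (bigD1 j) //= big1 ?addr0 => [|k /negbTE kj]; last first.
  by rewrite [delta_mx _ _ k _]mxE kj mulr0.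
rewrite mxE [delta_mx _ _ j _]mxE eqxx mulr1 (bigD1 i) //= big1 ?addr0.
  by rewrite hcE mxE !eqxx conjC1 mul1r.
by move=> k /negbTE ki; rewrite hcE mxE ki conjC0 mul0r.
Qed.

End Adjoint.

Section Duality.
Variables (C : numClosedFieldType) (n : nat).
Implicit Types (rho X D : 'M[C]_n) (f g : {linear 'M[C]_n -> 'M[C]_n}).

Lemma mxtrace_delta_mul (i j : 'I_n) D :
  \tr (delta_mx i j *m D) = D j i.
Proof.
rewrite /mxtrace (bigD1 i) //= big1 ?addr0 => [|k /negbTE ki]; last first.
  by rewrite mxE big1 // => l _; rewrite mxE ki mul0r.
rewrite mxE (bigD1 j) //= big1 ?addr0 => [|k /negbTE kj]; last first.
  by rewrite mxE kj andbF mul0r.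
by rewrite mxE !eqxx mul1r.
Qed.

Lemma dual_unique (f : 'M[C]_n -> 'M[C]_n) X D :
  (forall rho, \tr (rho *m D) = \tr (f rho *m X)) -> dual f X = D.
Proof. by move=> trD; apply/matrixP => j i; rewrite mxE -trD mxtrace_delta_mul. Qed.

Lemma mxtrace_mul_dual f rho X : \tr (rho *m dual f X) = \tr (f rho *m X).
Proof.
rewrite [in RHS](matrix_sum_delta rho) !linear_sum /= mulmx_suml raddf_sum.
rewrite {1}(matrix_sum_delta rho) mulmx_suml raddf_sum; apply: eq_bigr => i _.
rewrite !linear_sum /= !mulmx_suml !raddf_sum; apply: eq_bigr => j _.
by rewrite linearZ -!scalemxAl /= !mxtraceZ mxtrace_delta_mul mxE.
Qed.

Lemma dual_comp f g X : dual (f \o g) X = dual g (dual f X).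
Proof. by apply: dual_unique => rho; rewrite !mxtrace_mul_dual. Qed.

End Duality.

Section PositiveBlocks.
Variables (C : numClosedFieldType) (n : nat).

Definition block_form k (B : 'I_k -> 'I_k -> 'M[C]_n) (v w : 'I_k -> 'cV[C]_n) :=
  \sum_(i < k) \sum_(j < k) (hc (v i) *m B i j *m w j) 0 0.

Lemma psd_block_conj k (K : 'M[C]_n) (B : 'I_k -> 'I_k -> 'M[C]_n) :
  psd_block B -> psd_block (fun i j => K *m B i j *m hc K).
Proof.
move=> B_psd v; rewrite [leRHS](_ : _ = block_form B (fun i => hc K *m v i)
  (fun i => hc K *m v i)) ?B_psd //.
by apply: eq_bigr => i _; apply: eq_bigr => j _; rewrite hcM hcK !mulmxA.
Qed.

Lemma psd_block_sum k m (B : 'I_m -> 'I_k -> 'I_k -> 'M[C]_n) :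
  (forall a, psd_block (B a)) -> psd_block (fun i j => \sum_(a < m) B a i j).
Proof.
move=> B_psd v.
rewrite (eq_bigr (fun i => \sum_a \sum_j (hc (v i) *m B a i j *m v j) 0 0)).
  by rewrite exchange_big; apply: sumr_ge0 => a _; apply: B_psd.
move=> i _; rewrite exchange_big; apply: eq_bigr => j _.
by rewrite mulmx_sumr mulmx_suml summxE.
Qed.

Lemma psd_block_gram k (t : 'I_k -> 'cV[C]_n) :
  psd_block (fun i j => t i *m hc (t j)).
Proof.
move=> v; set s := \sum_(j < k) (hc (t j) *m v j) 0 0.
rewrite [leRHS](_ : _ = s^* * s); first by rewrite mulrC mul_conjC_ge0.
rewrite /s rmorph_sum mulr_suml; apply: eq_bigr => i _.
rewrite mulr_sumr; apply: eq_bigr => j _.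
rewrite !mulmxA -(mulmxA _ (hc (t j))) [LHS]mxE big_ord1; congr (_ * _).
by rewrite -[in RHS](hcK (v i)) -hcM hcE /= conjCK.
Qed.

Lemma real_affine_ge0_slope0 (c s : C) :
  (forall r, r \is Num.real -> 0 <= c + r * s) -> s = 0.
Proof.
move=> ge0; apply/eqP/negP => /negP s_neq0.
have c_ge0 : 0 <= c by have := ge0 0; rewrite real0 mul0r addr0; apply.
have s_real : s \is Num.real.
  by rewrite -[s](addKr c) rpredD ?rpredN ?ger0_real // -[s]mul1r ge0.
have r_real : - (c + 1) / s \is Num.real.
  by rewrite rpredM ?rpredV // rpredN rpredD ?real1 // ger0_real.
by have := ge0 _ r_real; rewrite mulfVK // opprD addrA subrr add0r ler0N1.
Qed.

Lemma sesqui_affine_ge0_coef0 (c a b : C) :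
  (forall t, 0 <= c + t * a + t^* * b) -> a = 0 /\ b = 0.
Proof.
move=> ge0.
have ab0 : a + b = 0.
  apply: (@real_affine_ge0_slope0 c) => r r_real.
  by rewrite [leRHS](_ : _ = c + r * a + r^* * b) ?ge0 // conj_Creal //; ring.
have ab : 'i * (a - b) = 0.
  apply: (@real_affine_ge0_slope0 c) => r r_real.
  rewrite [leRHS](_ : _ = c + r * 'i * a + (r * 'i)^* * b) ?ge0 //.
  by rewrite rmorphM /= conj_Creal // conjCi; ring.
move/eqP: ab; rewrite mulf_eq0 (negbTE (neq0Ci C)) subr_eq0 => /eqP ab.
suff b0 : b = 0 by rewrite ab b0.
by move/eqP: ab0; rewrite ab -mulr2n -mulr_natr mulf_eq0 pnatr_eq0 orbF => /eqP.
Qed.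

Lemma block_form_shift k (B : 'I_k -> 'I_k -> 'M[C]_n) v w t :
  block_form B (fun i => w i + t *: v i) (fun i => w i + t *: v i) =
  block_form B w w + t * block_form B w v + t^* * block_form B v w
  + t^* * t * block_form B v v.
Proof.
rewrite /block_form !mulr_sumr -!big_split; apply: eq_bigr => i _.
rewrite !mulr_sumr -!big_split; apply: eq_bigr => j _.
rewrite hcD hcZ !mulmxDl !mulmxDr -!scalemxAl -!scalemxAr !mxE /=; ring.
Qed.

Lemma psd_block_isotropic k (B : 'I_k -> 'I_k -> 'M[C]_n) v :
  psd_block B -> block_form B v v = 0 ->
  forall w, block_form B w v = 0 /\ block_form B v w = 0.
Proof.
move=> B_psd v0 w; apply: (@sesqui_affine_ge0_coef0 (block_form B w w)) => t.
have := B_psd (fun i => w i + t *: v i).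
by rewrite -/(block_form _ _ _) block_form_shift v0 mulr0 addr0.
Qed.

End PositiveBlocks.

Section Gram.
Variable C : numClosedFieldType.

Lemma gram_diag_ge0 k l (Y : 'M[C]_(k, l)) i : 0 <= (Y *m hc Y) i i.
Proof. by rewrite mxE; apply: sumr_ge0 => j _; rewrite hcE mul_conjC_ge0. Qed.

Lemma mxtrace_gram_ge0 k l (Y : 'M[C]_(k, l)) : 0 <= \tr (Y *m hc Y).
Proof. by apply: sumr_ge0 => i _; apply: gram_diag_ge0. Qed.

Lemma mxtrace_gram_eq0 k l (Y : 'M[C]_(k, l)) : \tr (Y *m hc Y) = 0 -> Y = 0.
Proof.
move=> tr0; apply/matrixP => i j; rewrite [RHS]mxE.
have Yii : \sum_j' Y i j' * (Y i j')^* = 0.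
  rewrite -[RHS](psumr_eq0P (fun i' _ => gram_diag_ge0 Y i') tr0 (i := i) isT) mxE.
  by apply: eq_bigr => j' _; rewrite hcE.
have /eqP := psumr_eq0P (fun j' _ => mul_conjC_ge0 (Y i j')) Yii (i := j) isT.
by rewrite mul_conjC_eq0 => /eqP.
Qed.

Lemma gram_kernel n m (K : 'M[C]_n) (N : 'I_m -> 'M[C]_n) :
  K *m (\sum_b N b *m hc (N b)) = 0 -> forall b, K *m N b = 0.
Proof.
move=> KG0 b; apply: mxtrace_gram_eq0.
have S0 : \sum_b \tr (K *m N b *m hc (K *m N b)) = 0.
  rewrite -raddf_sum /= (_ : \sum_b _ = K *m (\sum_b N b *m hc (N b)) *m hc K).
    by rewrite KG0 mul0mx linear0.
  by rewrite mulmx_sumr mulmx_suml; apply: eq_bigr => b' _; rewrite hcM !mulmxA.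
exact: (psumr_eq0P (fun b' _ => mxtrace_gram_ge0 _) S0 (i := b) isT).
Qed.

End Gram.

Section Kraus.
Variables (C : numClosedFieldType) (n m : nat) (L : 'I_m -> 'M[C]_n).

Lemma kraus_map_is_linear : linear (kraus_map L).
Proof.
move=> a x y; rewrite /kraus_map scaler_sumr -big_split; apply: eq_bigr => i _.
by rewrite mulmxDr mulmxDl -scalemxAr -scalemxAl.
Qed.

HB.instance Definition _ :=
  GRing.isLinear.Build C _ _ _ (kraus_map L) kraus_map_is_linear.

Lemma mxtrace_kraus_mul rho X :
  \tr (kraus_map L rho *m X) = \tr (rho *m \sum_a hc (L a) *m X *m L a).
Proof.
rewrite mulmx_suml mulmx_sumr !raddf_sum /=; apply: eq_bigr => a _.
by rewrite -!mulmxA mxtrace_mulC !mulmxA.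
Qed.

Lemma dual_kraus X : dual (kraus_map L) X = \sum_a hc (L a) *m X *m L a.
Proof. by apply: dual_unique => rho; rewrite mxtrace_kraus_mul. Qed.

Lemma kraus_trace_preserving :
  \sum_a hc (L a) *m L a = 1%:M -> trace_preserving (kraus_map L).
Proof.
move=> L_tp rho; rewrite -[kraus_map L rho]mulmx1 mxtrace_kraus_mul.
by under eq_bigr do rewrite mulmx1; rewrite L_tp mulmx1.
Qed.

Lemma kraus_completely_positive :
  completely_positive (kraus_map L).
Proof. by move=> k B B_psd; apply: psd_block_sum => a; apply: psd_block_conj. Qed.

Lemma kraus_channel :
  \sum_a hc (L a) *m L a = 1%:M -> channel (kraus_map L).
Proof.
move=> L_tp; split; first exact: kraus_map_is_linear.
by split; [exact: kraus_completely_positive | exact: kraus_trace_preserving].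
Qed.

End Kraus.

Section StarSubalgebra.
Variables (C : numClosedFieldType) (n : nat) (P : 'M[C]_n) (A : 'M[C]_n -> Prop).
Hypotheses (P_idem : P *m P = P) (A_sub : star_subalgebra_of P A).

Lemma star_subalgebra_hc X : A X -> A (hc X).
Proof. by case: A_sub => _ _ _ + _; apply. Qed.

Lemma star_subalgebra_mul X Y : A X -> A Y -> A (X *m Y).
Proof. by case: A_sub => _ _ + _ _; apply. Qed.

Lemma star_subalgebra_mulPl X : A X -> P *m X = X.
Proof. by case: A_sub => _ _ _ _ /[apply] ->; rewrite !mulmxA P_idem. Qed.

Lemma star_subalgebra_mulPr X : A X -> X *m P = X.
Proof. by case: A_sub => _ _ _ _ /[apply] ->; rewrite -!mulmxA P_idem. Qed.

End StarSubalgebra.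

(** * Correctability implies commutation *)

Section CompletelyPositive.
Variables (C : numClosedFieldType) (n : nat) (R : {linear 'M[C]_n -> 'M[C]_n}).
Hypothesis R_cp : completely_positive R.
Implicit Types (X : 'M[C]_n) (y z p : 'cV[C]_n).

(* With Kraus operators r_k of R this is sum_k (X r_k y - r_k z)(X r_k y - r_k z)^*. *)
Definition cp_defect X y z :=
  X *m R (y *m hc y) *m hc X - X *m R (y *m hc z) - R (z *m hc y) *m hc X
  + R (z *m hc z).

Let e_ i : 'cV[C]_n := delta_mx i 0.
Let vec3 (a b c : 'cV[C]_n) (i : 'I_3) := nth 0 [:: a; b; c] i.
Let gram3 y z p i j := R (vec3 y z p i *m hc (vec3 y z p j)).
Let ell X i := vec3 (hc X *m e_ i) (- e_ i) 0.

Let gram3_psd y z p : psd_block (gram3 y z p).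
Proof. exact/R_cp/psd_block_gram. Qed.

Let block_formE k (B : 'I_k -> 'I_k -> 'M[C]_n) v w :
  block_form B v w = (\sum_i \sum_j hc (v i) *m B i j *m w j) 0 0.
Proof. by rewrite summxE; apply: eq_bigr => i _; rewrite summxE. Qed.

Let block_form_defect X y z p i :
  block_form (gram3 y z p) (ell X i) (ell X i) = cp_defect X y z i i.
Proof.
rewrite block_formE !big_ord_recl !big_ord0 /gram3 /ell /vec3 /= !addr0.
rewrite -[RHS]delta_form; congr (_ 0 0).
rewrite hcM hcK hcN hc0 !mulmx0 !mul0mx !addr0.
by rewrite /cp_defect !(mulmxDr, mulmxDl, mulmxN, mulNmx, mulmxA, opprK) !addrA.
Qed.

Let block_form_defect_cross X y z p i k :
  block_form (gram3 y z p) (vec3 0 0 (e_ k)) (ell X i)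
    = (R (p *m hc y) *m hc X - R (p *m hc z)) k i /\
  block_form (gram3 y z p) (ell X i) (vec3 0 0 (e_ k))
    = (X *m R (y *m hc p) - R (z *m hc p)) i k.
Proof.
rewrite !block_formE !big_ord_recl !big_ord0 /gram3 /ell /vec3 /=.
split; rewrite -[RHS]delta_form; congr (_ 0 0);
  rewrite ?hcM ?hcK ?hcN hc0 !mulmx0 !mul0mx !add0r !addr0;
  by rewrite !(mulmxDr, mulmxDl, mulmxN, mulNmx, mulmxA).
Qed.

Lemma mxtrace_cp_defect X y z :
  \tr (cp_defect X y z) = \tr (R (y *m hc y) *m (hc X *m X))
    - \tr (R (y *m hc z) *m X) - \tr (R (z *m hc y) *m hc X) + \tr (R (z *m hc z)).
Proof.
rewrite /cp_defect !raddfD !raddfN /= -mulmxA mxtrace_mulC -mulmxA.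
by rewrite [\tr (X *m _)]mxtrace_mulC.
Qed.

Lemma cp_defect_diag_ge0 X y z i : 0 <= cp_defect X y z i i.
Proof. by rewrite -(block_form_defect _ _ _ 0); apply: gram3_psd. Qed.

Lemma mxtrace_cp_defect_ge0 X y z : 0 <= \tr (cp_defect X y z).
Proof. by apply: sumr_ge0 => i _; apply: cp_defect_diag_ge0. Qed.

Lemma cp_defect_eq0 X y z : \tr (cp_defect X y z) = 0 -> forall p,
  X *m R (y *m hc p) = R (z *m hc p) /\ R (p *m hc y) *m hc X = R (p *m hc z).
Proof.
move=> tr0 p.
have iso i k : block_form (gram3 y z p) (vec3 0 0 (e_ k)) (ell X i) = 0 /\
               block_form (gram3 y z p) (ell X i) (vec3 0 0 (e_ k)) = 0.
  apply: psd_block_isotropic => //; rewrite block_form_defect.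
  by apply: (psumr_eq0P _ tr0) => // j _; apply: cp_defect_diag_ge0.
split; apply/eqP; rewrite -subr_eq0; apply/eqP/matrixP => i k; rewrite [RHS]mxE.
  by have [_ <-] := block_form_defect_cross X y z p i k; case: (iso i k).
by have [<- _] := block_form_defect_cross X y z p k i; case: (iso k i).
Qed.

End CompletelyPositive.

Section Correctable.
Variables (C : numClosedFieldType) (n m : nat).
Variables (P : 'M[C]_n) (E : 'I_m -> 'M[C]_n) (A : 'M[C]_n -> Prop).
Variable R : {linear 'M[C]_n -> 'M[C]_n}.
Hypotheses (P_idem : P *m P = P) (P_herm : hc P = P).
Hypotheses (E_tp : \sum_a hc (E a) *m E a = 1%:M) (A_sub : star_subalgebra_of P A).
Hypotheses (R_cp : completely_positive R) (R_tp : trace_preserving R).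
Hypothesis R_corrects :
  forall X, A X -> P *m dual (R \o kraus_map E) X *m P = P *m X *m P.

Lemma mxtrace_corrected S Y :
  A Y -> \tr (R (kraus_map E (P *m S *m P)) *m Y) = \tr (S *m Y).
Proof.
move=> AY; rewrite -[LHS](mxtrace_mul_dual (R \o kraus_map E)).
rewrite -!mulmxA mxtrace_mulC -!mulmxA (mulmxA P) R_corrects //.
by rewrite (star_subalgebra_mulPl P_idem A_sub) ?(star_subalgebra_mulPr P_idem A_sub).
Qed.

Lemma sum_cp_defect_eq0 X w : A X ->
  \sum_a \tr (cp_defect R X (E a *m P *m w) (E a *m P *m (X *m w))) = 0.
Proof.
move=> AX; have AXh := star_subalgebra_hc A_sub AX.
have sumR v v' M : \sum_a \tr (R (E a *m P *m v *m hc (E a *m P *m v')) *m M)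
    = \tr (R (kraus_map E (P *m (v *m hc v') *m P)) *m M).
  rewrite -raddf_sum /= -mulmx_suml -linear_sum; congr (\tr (R _ *m M)).
  by apply: eq_bigr => a _; rewrite !hcM P_herm !mulmxA.
have sumR1 v : \sum_a \tr (R (E a *m P *m v *m hc (E a *m P *m v)))
    = \tr (P *m (v *m hc v) *m P).
  rewrite -raddf_sum /= -linear_sum R_tp -[RHS](kraus_trace_preserving E_tp).
  by apply: congr1; apply: eq_bigr => a _; rewrite !hcM P_herm !mulmxA.
under eq_bigr do rewrite mxtrace_cp_defect.
rewrite !big_split !sumrN /= !sumR sumR1 !mxtrace_corrected //; last first.
  exact: (star_subalgebra_mul A_sub).
rewrite !hcM !mulmxA (star_subalgebra_mulPl P_idem A_sub AX).
rewrite -[_ *m hc X *m P]mulmxA (star_subalgebra_mulPr P_idem A_sub AXh).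
by rewrite subrr sub0r addNr.
Qed.

Lemma correctable_intertwine X a (w p : 'cV[C]_n) : A X ->
  X *m R (E a *m P *m w *m hc p) = R (E a *m P *m (X *m w) *m hc p) /\
  R (p *m hc (E a *m P *m w)) *m hc X = R (p *m hc (E a *m P *m (X *m w))).
Proof.
move=> AX; apply: (cp_defect_eq0 R_cp).
apply: (psumr_eq0P _ (sum_cp_defect_eq0 w AX)) => // b _.
exact: mxtrace_cp_defect_ge0.
Qed.

Lemma correctable_commute X b c : A X -> comm_mx (P *m hc (E c) *m E b *m P) X.
Proof.
move=> AX; have AXh := star_subalgebra_hc A_sub AX.
have tr_rank1 (u v : 'cV[C]_n) : \tr (u *m hc v) = (hc v *m u) 0 0.
  by rewrite mxtrace_mulC trace_mx11.
apply/matrixP => k l; rewrite -[LHS]delta_form -[RHS]delta_form.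
set e := delta_mx.
transitivity (\tr (R (E b *m P *m (X *m e l 0) *m hc (E c *m P *m e k 0)))).
  by rewrite R_tp tr_rank1 !hcM P_herm !mulmxA.
transitivity (\tr (R (E b *m P *m e l 0 *m hc (E c *m P *m (hc X *m e k 0))))).
  have [<- _] := correctable_intertwine b (e l 0) (E c *m P *m e k 0) AX.
  have [_ <-] := correctable_intertwine c (e k 0) (E b *m P *m e l 0) AXh.
  by rewrite hcK mxtrace_mulC.
by rewrite R_tp tr_rank1 !hcM hcK P_herm !mulmxA.
Qed.

End Correctable.

(** * Commutation implies correctability *)

Lemma poly_interpolation (F : fieldType) (s : seq F) (f : F -> F) :
  exists p : {poly F}, {in s, forall x, p.[x] = f x}.
Proof.
elim: s => [|x s [p p_f]]; first by exists 0.
have [xs | xNs] := boolP (x \in s).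
  by exists p => y; rewrite inE => /predU1P [-> |]; apply: p_f.
set q := \prod_(y <- s) ('X - y%:P).
have qx_neq0 : q.[x] != 0.
  rewrite horner_prod prodf_seq_neq0; apply/allP => y ys /=.
  by rewrite hornerXsubC subr_eq0; apply: contraNneq xNs => ->.
exists (p + ((f x - p.[x]) / q.[x]) *: q) => y; rewrite inE hornerD hornerZ.
case/predU1P => [-> | ys]; first by rewrite mulfVK // addrC subrK.
have -> : q.[y] = 0.
  apply/eqP; rewrite horner_prod prodf_seq_eq0; apply/hasP.
  by exists y; rewrite //= hornerXsubC subrr.
by rewrite mulr0 addr0 p_f.
Qed.

(* f(G) for a normal G = U^* diag(d) U; locked because rewriting with matrix
   product lemmas would otherwise unfold it. *)
Definition mx_fun (C : numClosedFieldType) n (G : 'M[C]_n) (f : C -> C) :=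
  locked (hc (spectralmx G) *m diag_mx (map_mx f (spectral_diag G))
          *m spectralmx G).

Lemma mx_funE (C : numClosedFieldType) n (G : 'M[C]_n) f :
  mx_fun G f
  = hc (spectralmx G) *m diag_mx (map_mx f (spectral_diag G)) *m spectralmx G.
Proof. by rewrite /mx_fun -lock. Qed.

Section FunctionalCalculus.
Variables (C : numClosedFieldType) (n : nat) (G : 'M[C]_n).
Hypothesis G_normal : G \is normalmx.
Local Notation U := (spectralmx G).
Local Notation d := (spectral_diag G).
Implicit Types f g : C -> C.

Let U_hcU : U *m hc U = 1%:M.
Proof. by rewrite hc_trmxC; apply/unitarymxP; apply: spectral_unitarymx. Qed.

Let hcU_U : hc U *m U = 1%:M.
Proof. exact: mulmx1C U_hcU. Qed.

Lemma mx_fun_id : mx_fun G id = G.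
Proof.
rewrite mx_funE map_mx_id // [RHS](orthomx_spectralP G_normal).
by rewrite invmx_unitary ?spectral_unitarymx // hc_trmxC.
Qed.

Lemma mx_funM f g : mx_fun G f *m mx_fun G g = mx_fun G (fun x => f x * g x).
Proof.
rewrite !mx_funE -!mulmxA (mulmxA U) U_hcU mul1mx (mulmxA (diag_mx _)) mulmx_diag.
by congr (_ *m (diag_mx _ *m _)); apply/rowP => j; rewrite !mxE.
Qed.

Lemma eq_mx_fun f g : (forall j, f (d 0 j) = g (d 0 j)) -> mx_fun G f = mx_fun G g.
Proof.
move=> fg; rewrite !mx_funE; congr (_ *m diag_mx _ *m _).
by apply/rowP => j; rewrite !mxE.
Qed.

Lemma mx_fun_exp i : mx_fun G (fun x => x ^+ i) = G ^+ i.
Proof.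
elim: i => [|i IHi].
  rewrite expr0 mx_funE (_ : map_mx _ _ = const_mx 1).
    by rewrite diag_const_mx mul_mx_scalar scale1r hcU_U.
  by apply/rowP => j; rewrite !mxE.
rewrite exprS -IHi -[G in G * _]mx_fun_id -mulmxE mx_funM.
by apply: eq_mx_fun => j; rewrite exprS.
Qed.

Lemma hc_mx_fun f : hc (mx_fun G f) = mx_fun G (fun x => (f x)^*).
Proof.
rewrite !mx_funE !hcM hcK mulmxA /hc map_diag_mx tr_diag_mx -map_mx_comp.
by rewrite -/(hc _).
Qed.

Lemma mx_fun_horner p :
  mx_fun G (horner p) = \sum_(i < size p) p`_i *: G ^+ i.
Proof.
rewrite mx_funE (_ : map_mx _ d = \sum_(i < size p) p`_i *: map_mx (fun x => x ^+ i) d).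
  rewrite linear_sum mulmx_sumr mulmx_suml; apply: eq_bigr => i _.
  by rewrite linearZ -scalemxAr -scalemxAl -mx_fun_exp mx_funE.
apply/rowP => j; rewrite summxE !mxE horner_coef.
by apply: eq_bigr => i _; rewrite !mxE.
Qed.

Lemma mx_fun_polynomial f : exists p : {poly C},
  mx_fun G f = \sum_(i < size p) p`_i *: G ^+ i.
Proof.
have [p p_f] := poly_interpolation [seq d 0 j | j <- enum 'I_n] f.
exists p; rewrite -mx_fun_horner; apply: eq_mx_fun => j; rewrite p_f //.
by apply: map_f; rewrite mem_enum.
Qed.

Lemma spectral_diag_ge0 j :
  (forall v : 'cV[C]_n, 0 <= (hc v *m G *m v) 0 0) -> 0 <= d 0 j.
Proof.
move=> G_psd; have := G_psd (hc U *m delta_mx j 0).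
rewrite hcM hcK -[G in _ *m G *m _]mx_fun_id mx_funE map_mx_id //.
by rewrite -!mulmxA !(mulmxA U) !U_hcU !mul1mx mulmxA delta_form mxE eqxx mulr1n.
Qed.

End FunctionalCalculus.

Section Recovery.
Variables (C : numClosedFieldType) (n m : nat).
Variables (P : 'M[C]_n) (N : 'I_m -> 'M[C]_n) (A : 'M[C]_n -> Prop).
Hypotheses (N_tp : \sum_a hc (N a) *m N a = P) (A_P : forall X, A X -> X *m P = X).
Hypothesis N_comm : forall X, A X -> forall b c, comm_mx (hc (N c) *m N b) X.

Let G := \sum_b N b *m hc (N b).

Let G_herm : hc G = G.
Proof. by rewrite raddf_sum; apply: eq_bigr => b _; rewrite /= hcM hcK. Qed.

Let G_normal : G \is normalmx.
Proof. by apply/normalmxP; rewrite -hc_trmxC G_herm. Qed.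

Let G_psd (v : 'cV[C]_n) : 0 <= (hc v *m G *m v) 0 0.
Proof.
rewrite mulmx_sumr mulmx_suml summxE; apply: sumr_ge0 => b _.
suff -> : hc v *m (N b *m hc (N b)) *m v = hc v *m N b *m hc (hc v *m N b).
  exact: gram_diag_ge0.
by rewrite hcM hcK !mulmxA.
Qed.

Let commuting Y := forall a c X, A X -> comm_mx X (hc (N a) *m Y *m N c).

(* hc (N a) *m (G *m Y) *m N c = sum_b (hc (N a) *m N b) *m (hc (N b) *m Y *m N c) *)
Let commuting_exp i : commuting (G ^+ i).
Proof.
elim: i => [|i IHi] a c X AX.
  by rewrite expr0 mulmx1; apply/comm_mx_sym/N_comm.
rewrite exprS -mulmxE /G mulmx_suml mulmx_sumr mulmx_suml.
apply: big_ind => [|M1 M2|b _]; [exact: comm_mx0 | exact: comm_mxD |].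
rewrite !mulmxA -!(mulmxA (hc (N a) *m N b)).
by apply: comm_mxM; [apply/comm_mx_sym/N_comm | apply: IHi].
Qed.

Let commuting_mx_fun f : commuting (mx_fun G f).
Proof.
have [p ->] := mx_fun_polynomial G_normal f; move=> a c X AX.
rewrite mulmx_sumr mulmx_suml.
apply: big_ind => [|M1 M2|i _]; [exact: comm_mx0 | exact: comm_mxD |].
by rewrite /comm_mx -scalemxAr -scalemxAl -!scalemxAl -scalemxAr commuting_exp.
Qed.

Local Notation Z := (mx_fun G (fun x => (sqrtC x)^-1)).
Local Notation Pi := (mx_fun G (fun x => x / x)).

Let Z_herm : hc Z = Z.
Proof.
rewrite hc_mx_fun; apply: eq_mx_fun => j.
by rewrite geC0_conj // invr_ge0 sqrtC_ge0 spectral_diag_ge0.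
Qed.

Let ZGZ : Z *m G *m Z = Pi.
Proof.
rewrite -[G in Z *m G]mx_fun_id // !mx_funM //; apply: eq_mx_fun => j /=.
by rewrite mulrAC -expr2 exprVn sqrtCK mulrC.
Qed.

Let Pi_herm : hc Pi = Pi.
Proof. by rewrite -ZGZ (hcM (Z *m G)) (hcM Z) Z_herm G_herm mulmxA. Qed.

Let Pi_idem : Pi *m Pi = Pi.
Proof.
rewrite mx_funM //; apply: eq_mx_fun => j.
by have [->|x_neq0] := eqVneq (spectral_diag G 0 j) 0; rewrite ?mul0r ?divff ?mulr1.
Qed.

Let Pi_G : Pi *m G = G.
Proof.
rewrite -[G in Pi *m G]mx_fun_id // mx_funM // -[RHS]mx_fun_id //.
apply: eq_mx_fun => j /=.
by have [->|x_neq0] := eqVneq (spectral_diag G 0 j) 0; rewrite ?mulr0 ?divfK.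
Qed.

Let Pi_N b : Pi *m N b = N b.
Proof.
have : (1%:M - Pi) *m N b = 0.
  by apply: gram_kernel; rewrite mulmxBl mul1mx -/G Pi_G subrr.
by move/eqP; rewrite mulmxBl mul1mx subr_eq0 eq_sym => /eqP.
Qed.

(* Index ord0 carries 1 - Pi, index lift ord0 c carries hc (N c) *m Z. *)
Let L (i : 'I_m.+1) :=
  if unlift ord0 i is Some c then hc (N c) *m Z else 1%:M - Pi.

Let L_tp : \sum_i hc (L i) *m L i = 1%:M.
Proof.
rewrite big_ord_recl /L unlift_none; under eq_bigr do rewrite liftK.
rewrite (_ : \sum_c _ = Z *m G *m Z); last first.
  rewrite /G mulmx_sumr mulmx_suml; apply: eq_bigr => c _.
  by rewrite hcM hcK Z_herm !mulmxA.
rewrite ZGZ hcB hc1 Pi_herm mulmxBr mulmx1 mulmxBl mul1mx Pi_idem.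
by rewrite subrr subr0 subrK.
Qed.

Let L_corrects X : A X -> \sum_a hc (N a) *m dual (kraus_map L) X *m N a = X.
Proof.
move=> AX; rewrite -[RHS](A_P AX) -N_tp mulmx_sumr; apply: eq_bigr => a _.
rewrite dual_kraus mulmx_sumr mulmx_suml big_ord_recl /L unlift_none.
under eq_bigr do rewrite liftK.
have KN0 : (1%:M - Pi) *m N a = 0 by rewrite mulmxBl mul1mx Pi_N subrr.
rewrite -!mulmxA KN0 !mulmx0 add0r !mulmxA.
rewrite (eq_bigr (fun c =>
  X *m (hc (N a) *m (Z *m (N c *m hc (N c)) *m Z) *m N a))).
  rewrite -mulmx_sumr -mulmx_suml -mulmx_sumr -mulmx_suml -mulmx_sumr -/G ZGZ.
  by rewrite -(mulmxA (hc (N a))) Pi_N mulmxA.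
move=> c _; rewrite (hcM (hc (N c))) hcK Z_herm !mulmxA.
by rewrite -(commuting_mx_fun _ a c AX) !mulmxA.
Qed.

Lemma recovery_kraus : exists L : 'I_m.+1 -> 'M[C]_n,
  \sum_i hc (L i) *m L i = 1%:M /\
  forall X, A X -> \sum_a hc (N a) *m dual (kraus_map L) X *m N a = X.
Proof. by exists L; split; [exact: L_tp | exact: L_corrects]. Qed.

End Recovery.

Lemma commute_correctable (C : numClosedFieldType) n m
    (P : 'M[C]_n) (E : 'I_m -> 'M[C]_n) (A : 'M[C]_n -> Prop) :
  P *m P = P -> hc P = P -> \sum_a hc (E a) *m E a = 1%:M ->
  star_subalgebra_of P A ->
  (forall X, A X -> forall b c, comm_mx (P *m hc (E c) *m E b *m P) X) ->
  exists L : 'I_m.+1 -> 'M[C]_n, channel (kraus_map L) /\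
    forall X, A X -> P *m dual (kraus_map L \o kraus_map E) X *m P = P *m X *m P.
Proof.
move=> P_idem P_herm E_tp A_sub E_comm.
have hcEP a : hc (E a *m P) = P *m hc (E a) by rewrite hcM P_herm.
have N_tp : \sum_a hc (E a *m P) *m (E a *m P) = P.
  rewrite (eq_bigr (fun a => P *m (hc (E a) *m E a) *m P)) => [|a _].
    by rewrite -mulmx_suml -mulmx_sumr E_tp mulmx1 P_idem.
  by rewrite hcEP !mulmxA.
have N_comm X : A X -> forall b c, comm_mx (hc (E c *m P) *m (E b *m P)) X.
  by move=> AX b c; rewrite hcEP !mulmxA; apply: E_comm.
have [L [L_tp L_corrects]] :=
  recovery_kraus N_tp (star_subalgebra_mulPr P_idem A_sub) N_comm.
exists L; split; first exact: kraus_channel.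
move=> X AX; rewrite dual_comp dual_kraus mulmx_sumr mulmx_suml.
rewrite (star_subalgebra_mulPl P_idem A_sub AX).
rewrite (star_subalgebra_mulPr P_idem A_sub AX).
by rewrite -[RHS]L_corrects //; apply: eq_bigr => a _; rewrite hcEP !mulmxA.
Qed.

Theorem theorem2 (C : numClosedFieldType) (n m : nat)
    (P : 'M[C]_n) (E : 'I_m -> 'M[C]_n) (A : 'M[C]_n -> Prop) :
  orth_proj P ->
  \sum_(a < m) hc (E a) *m E a = 1%:M ->
  star_subalgebra_of P A ->
  (exists R : 'M[C]_n -> 'M[C]_n,
      channel R /\
      forall X, A X ->
        P *m dual (fun rho => R (kraus_map E rho)) X *m P = P *m X *m P)
  <->
  (forall X, A X -> forall b c : 'I_m,
      (P *m hc (E c) *m E b *m P) *m X = X *m (P *m hc (E c) *m E b *m P)).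
Proof.
move=> [P_idem P_herm] E_tp A_sub; split.
  move=> [R [[R_lin [R_cp R_tp]] R_corrects]] X AX b c.
  pose RL : {linear 'M[C]_n -> 'M[C]_n} :=
    HB.pack R (GRing.isLinear.Build C _ _ _ R R_lin).
  exact: (@correctable_commute C n m P E A RL
            P_idem P_herm E_tp A_sub R_cp R_tp R_corrects X b c AX).
move=> E_comm.
have [L [L_channel L_corrects]] := commute_correctable P_idem P_herm E_tp A_sub E_comm.
by exists (kraus_map L).
Qed.
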